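(* Let $\pi_1=(a_1,b_1,c_1,d_1)$ and $\pi_2=(a_2,b_2,c_2,d_2)$ be a chainable pair of patterns. Then $$\mathbf{S}_{\pi_1}\mathbf{S}_{\pi_2}=r(\pi_1,\pi_2)\,\mathbf{S}_{\pi_1*\pi_2}.$$
   Context: A pattern is a tuple $\pi=(a,b,c,d)$ of positive integers and $\mathbf{S}_\pi:=\mathbf{I}_a\otimes\mathbf{1}_{b\times c}\otimes\mathbf{I}_d\in\{0,1\}^{abd\times acd}$, where $\mathbf{I}_k$ is the identity, $\mathbf{1}_{p\times q}$ the all-ones matrix and $\otimes$ the Kronecker product. $\pi_1,\pi_2$ are chainable if $a_1c_1/a_2=b_2d_2/d_1$, this common value (denoted $r(\pi_1,\pi_2)$) is an integer, $a_1\mid a_2$ and $d_2\mid d_1$. Then $\pi_1*\pi_2:=(a_1,\,b_1d_1/d_2,\,a_2c_2/a_1,\,d_2)$. *)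

(* Kronecker product: [tensmx] ("A *t B") from
   mathcomp-real-closed's mxtens.v (standard Kronecker, row index i*p+k). *)
From mathcomp Require Import all_boot all_algebra.
From mathcomp Require Import mxtens.
Set Implicit Arguments. Unset Strict Implicit. Unset Printing Implicit Defensive.
Import GRing.Theory.
Local Open Scope ring_scope.

Record pattern := Pattern { pa : nat; pb : nat; pc : nat; pd : nat }.

Definition pattern_pos (p : pattern) : Prop :=
  (0 < pa p)%N /\ (0 < pb p)%N /\ (0 < pc p)%N /\ (0 < pd p)%N.

Definition Smx (p : pattern) : 'M[int]_(pa p * pb p * pd p, pa p * pc p * pd p) :=
  ((1%:M : 'M[int]_(pa p)) *t (const_mx 1 : 'M[int]_(pb p, pc p)))
    *t (1%:M : 'M[int]_(pd p)).

(* chainable: a1 c1 / a2 = b2 d2 / d1, this common value is an integer,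
   a1 | a2 and d2 | d1. *)
Definition chainable (p1 p2 : pattern) : Prop :=
  [/\ (pa p2 %| pa p1 * pc p1)%N, (pd p1 %| pb p2 * pd p2)%N,
      (pa p1 * pc p1 %/ pa p2 = pb p2 * pd p2 %/ pd p1)%N,
      (pa p1 %| pa p2)%N & (pd p2 %| pd p1)%N].

Definition rval (p1 p2 : pattern) : nat := (pa p1 * pc p1 %/ pa p2)%N.

Definition pchain (p1 p2 : pattern) : pattern :=
  Pattern (pa p1) (pb p1 * pd p1 %/ pd p2) (pa p2 * pc p2 %/ pa p1) (pd p2).

(* The (i, j) entry of S_(a,b,c,d) is 1 exactly when i and j lie in the same
   diagonal block (i / bd = j / cd) and agree modulo d.  Chainability forces
   a2 = k a1, d1 = e d2, c1 = k r and b2 = r e, where r = r(pi1, pi2).  The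
   m-th term of the (i, j) entry of S_pi1 S_pi2 is then nonzero exactly when
   the (i, j) entry of S_(pi1 * pi2) is 1, m lies in the column block j / c2 d2
   of S_pi2, of length r d1, and m = i mod d1; such a block contains exactly r
   such m. *)

From mathcomp Require Import all_boot all_algebra.
From mathcomp Require Import mxtens.
From mathcomp Require Import zify.

Set Implicit Arguments.
Unset Strict Implicit.
Unset Printing Implicit Defensive.

Import GRing.Theory.

Local Open Scope nat_scope.

Lemma divn_block L u m : u * L <= m < u.+1 * L -> m %/ L = u.
Proof.
case/andP=> lo hi.
have L_gt0 : 0 < L by rewrite lt0n; apply: contraTneq hi => ->; rewrite muln0.
by apply/eqP; rewrite eqn_leq leq_divRL // lo andbT -ltnS ltn_divLR.
Qed.

Lemma big_nat_block (R : Type) (idx : R) (op : R -> R -> R) (F : nat -> R) u k :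
  \big[op/idx]_(u * k <= m < u.+1 * k) F m
  = \big[op/idx]_(0 <= m < k) F (m + u * k).
Proof. by rewrite mulSn -{1}(add0n (u * k)) big_addn addnK. Qed.

Lemma sum_modn_eq q d t : t < d -> \sum_(0 <= m < q * d) (m %% d == t) = q.
Proof.
move=> t_lt_d; rewrite big_nat_mul (eq_bigr (fun=> 1)).
  by rewrite sum_nat_const_nat subn0 muln1.
move=> w _; rewrite big_nat_block.
transitivity (\sum_(0 <= z < d | z == t) 1); last by rewrite big_nat1_eq t_lt_d.
rewrite [RHS]big_mkcond; apply: eq_big_nat => z /andP[_ z_lt_d].
by rewrite addnC modnMDl modn_small.
Qed.

Lemma sum_divn_modn_eq n q d J t : t < d -> J < n ->
  \sum_(m < n * (q * d)) ((m %/ (q * d) == J) && (m %% d == t)) = q.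
Proof.
move=> t_lt_d J_lt_n.
rewrite -(big_mkord xpredT (fun m => ((m %/ (q * d) == J) && (m %% d == t) : nat))).
transitivity (\sum_(0 <= u < n | u == J)
                \sum_(u * (q * d) <= m < u.+1 * (q * d)) (m %% d == t)).
  rewrite big_nat_mul [RHS]big_mkcond; apply: eq_big_nat => u _.
  case: eqP => [<-|u_neq_J].
    by apply: eq_big_nat => m /divn_block ->; rewrite eqxx.
  rewrite big_nat_cond big1 // => m /andP[/divn_block -> _].
  by rewrite (introF eqP u_neq_J).
rewrite big_nat1_eq J_lt_n big_nat_block -[RHS](sum_modn_eq q t_lt_d).
by apply: eq_bigr => m _; rewrite addnC mulnA modnMDl.
Qed.

Definition pattern_entry (p : pattern) (i j : nat) : bool :=
  (i %/ (pd p * pb p) == j %/ (pd p * pc p)) && (i %% pd p == j %% pd p).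

Lemma SmxE p i j : Smx p i j = (pattern_entry p i j)%:R%R.
Proof. by rewrite /Smx !mxE /= mulr1 -natrM mulnb /pattern_entry !divnMA. Qed.

Lemma chainable_factor p1 p2 :
  pattern_pos p1 -> pattern_pos p2 -> chainable p1 p2 ->
  exists k e, [/\ pa p2 = k * pa p1, pd p1 = e * pd p2,
                  pc p1 = k * rval p1 p2 & pb p2 = rval p1 p2 * e].
Proof.
move=> [a1_gt0 _] [_ [_ [_ d2_gt0]]].
case=> a2_dvd d1_dvd r_eq /dvdnP[k a2E] /dvdnP[e d1E]; exists k, e; split=> //.
- apply/eqP; rewrite -(eqn_pmul2l a1_gt0) -(divnK a2_dvd) -/(rval p1 p2) a2E.
  by apply/eqP; lia.
- apply/eqP; rewrite -(eqn_pmul2r d2_gt0) -(divnK d1_dvd) -r_eq -/(rval p1 p2) d1E.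
  by apply/eqP; lia.
Qed.

Section ChainedProduct.

Variables (p1 p2 : pattern) (k e : nat).
Hypotheses (pos1 : pattern_pos p1) (pos2 : pattern_pos p2).
Hypotheses (a2E : pa p2 = k * pa p1) (d1E : pd p1 = e * pd p2).
Hypotheses (c1E : pc p1 = k * rval p1 p2) (b2E : pb p2 = rval p1 p2 * e).
Local Notation r := (rval p1 p2).

Lemma pchainE : pchain p1 p2 = Pattern (pa p1) (pb p1 * e) (k * pc p2) (pd p2).
Proof.
case: pos1 pos2 => a1_gt0 _ [_ [_ [_ d2_gt0]]].
by rewrite /pchain d1E a2E mulnA mulnK // mulnAC mulnK.
Qed.

Lemma pattern_entry_mul_split i j m :
  pattern_entry p1 i m * pattern_entry p2 m j
  = pattern_entry (pchain p1 p2) i j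
    * ((m %/ (r * pd p1) == j %/ (pd p2 * pc p2)) && (m %% pd p1 == i %% pd p1)).
Proof.
have col1 : m %/ (pd p1 * pc p1) = m %/ (r * pd p1) %/ k.
  by rewrite -divnMA c1E; congr (_ %/ _); lia.
have blk2 : pd p2 * pb p2 = r * pd p1 by rewrite b2E d1E; lia.
have row : i %/ (pd p1 * pb p1) = i %/ (pd p2 * (pb p1 * e)).
  by rewrite d1E; congr (_ %/ _); lia.
have col : j %/ (pd p2 * (k * pc p2)) = j %/ (pd p2 * pc p2) %/ k.
  by rewrite -divnMA; congr (_ %/ _); lia.
have res x : x %% pd p2 = x %% pd p1 %% pd p2 by rewrite modn_dvdm // d1E dvdn_mull.
rewrite pchainE /pattern_entry /= col1 blk2 row col (res m) (res i).
case: (eqVneq (m %/ (r * pd p1)) (j %/ (pd p2 * pc p2))) => [->|_];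
  last by rewrite /= !muln0.
case: (eqVneq (i %% pd p1) (m %% pd p1)) => [->|_]; last by rewrite andbF /= !muln0.
by rewrite !andbT muln1 mulnb.
Qed.

Lemma sum_pattern_entry_mul i j : j < pa p2 * pc p2 * pd p2 ->
  \sum_(m < pa p1 * pc p1 * pd p1) pattern_entry p1 i m * pattern_entry p2 m j
  = r * pattern_entry (pchain p1 p2) i j.
Proof.
case: pos1 pos2 => _ [_ [_ d1_gt0]] [_ [_ [c2_gt0 d2_gt0]]] j_lt.
under eq_bigr do rewrite pattern_entry_mul_split.
rewrite -big_distrr /= mulnC; congr (_ * _).
have -> : pa p1 * pc p1 * pd p1 = pa p2 * (r * pd p1) by rewrite a2E c1E; lia.
rewrite sum_divn_modn_eq ?ltn_mod // ltn_divLR ?muln_gt0 ?d2_gt0 //.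
by rewrite (mulnC (pd p2)) mulnA.
Qed.

End ChainedProduct.

Local Open Scope ring_scope.

Theorem proposition4p5 (p1 p2 : pattern)
  (hp1 : pattern_pos p1) (hp2 : pattern_pos p2) (hch : chainable p1 p2)
  (eI : (pa p2 * pb p2 * pd p2 = pa p1 * pc p1 * pd p1)%N)
  (eR : (pa (pchain p1 p2) * pb (pchain p1 p2) * pd (pchain p1 p2)
         = pa p1 * pb p1 * pd p1)%N)
  (eC : (pa (pchain p1 p2) * pc (pchain p1 p2) * pd (pchain p1 p2)
         = pa p2 * pc p2 * pd p2)%N) :
  Smx p1 *m castmx (eI, erefl) (Smx p2)
  = castmx (eR, eC) ((rval p1 p2)%:R *: Smx (pchain p1 p2)).
Proof.
have [k [e [a2E d1E c1E b2E]]] := chainable_factor hp1 hp2 hch.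
apply/matrixP => i j; rewrite [RHS]castmxE [RHS]mxE SmxE [LHS]mxE.
under eq_bigr do rewrite castmxE !SmxE -natrM.
by rewrite -natr_sum -natrM /= (sum_pattern_entry_mul hp1 hp2 a2E d1E c1E b2E).
Qed.
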